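(* In the calculus $\lambda^{RE}$ described in the context: if $e_1\Rrightarrow^*e_2$, then for every constant $c$, $e_1\to^*c$ if and only if $e_2\to^*c$.
   Context: Syntax of $\lambda^{RE}$. Basic types $b ::= \mathsf{Bool}\mid\mathsf{Unit}$. Constants $c ::= \mathsf{true}\mid\mathsf{false}\mid\mathsf{unit}\mid (=_b)\mid (=_{(c,b)})$. Expressions $e ::= c\mid x\mid e\ e\mid \lambda x{:}\tau.\,e\mid \mathsf{BEq}_b\ e\ e\ e\mid \mathsf{XEq}_{x:\tau\to\tau}\ e\ e\ e$. Values $v ::= c\mid \lambda x{:}\tau.\,e\mid \mathsf{BEq}_b\ e\ e\ v\mid \mathsf{XEq}_{x:\tau\to\tau}\ e\ e\ v$. Types $\tau ::= \{x{:}b\mid e\}\mid x{:}\tau\to\tau\mid \mathsf{PEq}_{\tau}\{e\}\{e\}$. $e[x:=e']$ is capture-avoiding substitution. Reduction: evaluation contexts $E ::= \bullet\mid E\ e\mid v\ E\mid \mathsf{BEq}_b\ e\ e\ E\mid\mathsf{XEq}_{x:\tau\to\tau}\ e\ e\ E$; $E[e]\to E[e']$ if $e\to e'$; $(\lambda x{:}\tau.\,e)\ v\to e[x:=v]$; $(=_b)\ c_1\to(=_{(c_1,b)})$; $(=_{(c_1,b)})\ c_2\to\mathsf{true}$ if $c_1,c_2$ syntactically equal, else $\to\mathsf{false}$. $\to^*$ is the reflexive–transitive closure. Parallel reduction $e\Rrightarrow e'$ and $\tau\Rrightarrow\tau'$ is defined inductively: $x\Rrightarrow x$; $c\Rrightarrow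 c$; $\lambda x{:}\tau.e\Rrightarrow\lambda x{:}\tau'.e'$ if $\tau\Rrightarrow\tau'$, $e\Rrightarrow e'$; $e_1\ e_2\Rrightarrow e_1'\ e_2'$ if $e_i\Rrightarrow e_i'$; $(\lambda x{:}\tau.e)\ v\Rrightarrow e'[x:=v']$ if $e\Rrightarrow e'$ and $v\Rrightarrow v'$; $(=_b)\ c_1\Rrightarrow(=_{(c_1,b)})$; $(=_{(c_1,b)})\ c_2\Rrightarrow d$ where $d=\mathsf{true}$ if $c_1,c_2$ are syntactically equal and $\mathsf{false}$ otherwise; $\mathsf{BEq}_b\ e_l\ e_r\ e\Rrightarrow\mathsf{BEq}_b\ e_l'\ e_r'\ e'$ if $e_l\Rrightarrow e_l'$, $e_r\Rrightarrow e_r'$, $e\Rrightarrow e'$; $\mathsf{XEq}_{x:\tau_x\to\tau}\ e_l\ e_r\ e\Rrightarrow\mathsf{XEq}_{x:\tau_x'\to\tau'}\ e_l'\ e_r'\ e'$ if all five components parallel reduce; on types: $\{x{:}b\mid r\}\Rrightarrow\{x{:}b\mid r'\}$ if $r\Rrightarrow r'$; $x{:}\tau_x\to\tau\Rrightarrow x{:}\tau_x'\to\tau'$ if $\tau_x\Rrightarrow\tau_x'$, $\tau\Rrightarrow\tau'$; $\mathsf{PEq}_\tau\{e_l\}\{e_r\}\Rrightarrow\mathsf{PEq}_{\tau'}\{e_l'\}\{e_r'\}$ if all components parallel reduce. $\Rrightarrow^*$ is the reflexive–transitive closure of $\Rrightarrow$. *)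

From Stdlib Require Import Arith Relations.

Inductive basic : Type := BBool | BUnit.

Inductive const : Type :=
| CTrue | CFalse | CUnit
| CEqb (b : basic)
| CEqc (c : const) (b : basic) .

Definition basic_eq_dec (a b : basic) : {a = b} + {a <> b}.
Proof. decide equality. Defined.

Definition const_eq_dec (c1 c2 : const) : {c1 = c2} + {c1 <> c2}.
Proof. decide equality; apply basic_eq_dec. Defined.

(* Binders (de Bruijn): Lam t e binds in e; TRef b r binds in r;
   TArr tx t binds in t; XEq tx t el er e binds in t only. *)
Inductive expr : Type :=
| Const (c : const)
| Var (n : nat)
| App (e1 e2 : expr)
| Lam (t : ty) (e : expr)
| BEq (b : basic) (el er e : expr)
| XEq (tx t : ty) (el er e : expr)
with ty : Type :=
| TRef (b : basic) (r : expr)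
| TArr (tx t : ty)
| TPEq (t : ty) (el er : expr).

Fixpoint lift_e (c : nat) (e : expr) : expr :=
  match e with
  | Const k => Const k
  | Var n => if n <? c then Var n else Var (S n)
  | App e1 e2 => App (lift_e c e1) (lift_e c e2)
  | Lam t e => Lam (lift_t c t) (lift_e (S c) e)
  | BEq b el er e => BEq b (lift_e c el) (lift_e c er) (lift_e c e)
  | XEq tx t el er e => XEq (lift_t c tx) (lift_t (S c) t) (lift_e c el) (lift_e c er) (lift_e c e)
  end
with lift_t (c : nat) (t : ty) : ty :=
  match t with
  | TRef b r => TRef b (lift_e (S c) r)
  | TArr tx t => TArr (lift_t c tx) (lift_t (S c) t)
  | TPEq t el er => TPEq (lift_t c t) (lift_e c el) (lift_e c er)
  end.

Fixpoint subst_e (k : nat) (s : expr) (e : expr) : expr :=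
  match e with
  | Const c => Const c
  | Var n => if n <? k then Var n else if n =? k then s else Var (pred n)
  | App e1 e2 => App (subst_e k s e1) (subst_e k s e2)
  | Lam t e => Lam (subst_t k s t) (subst_e (S k) (lift_e 0 s) e)
  | BEq b el er e => BEq b (subst_e k s el) (subst_e k s er) (subst_e k s e)
  | XEq tx t el er e => XEq (subst_t k s tx) (subst_t (S k) (lift_e 0 s) t)
                            (subst_e k s el) (subst_e k s er) (subst_e k s e)
  end
with subst_t (k : nat) (s : expr) (t : ty) : ty :=
  match t with
  | TRef b r => TRef b (subst_e (S k) (lift_e 0 s) r)
  | TArr tx t => TArr (subst_t k s tx) (subst_t (S k) (lift_e 0 s) t)
  | TPEq t el er => TPEq (subst_t k s t) (subst_e k s el) (subst_e k s er)
  end.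

(* e[x:=v] where x is the binder of the body e *)
Definition subst0 (e v : expr) : expr := subst_e 0 v e.

Definition eq_result (c1 c2 : const) : const :=
  if const_eq_dec c1 c2 then CTrue else CFalse.

Inductive is_value : expr -> Prop :=
| VConst c : is_value (Const c)
| VLam t e : is_value (Lam t e)
| VBEq b el er v : is_value v -> is_value (BEq b el er v)
| VXEq tx t el er v : is_value v -> is_value (XEq tx t el er v).

Inductive ectx : Type :=
| EHole
| EAppL (E : ectx) (e : expr)
| EAppR (v : expr) (E : ectx)
| EBEq (b : basic) (el er : expr) (E : ectx)
| EXEq (tx t : ty) (el er : expr) (E : ectx).

Inductive ectx_wf : ectx -> Prop :=
| WHole : ectx_wf EHole
| WAppL E e : ectx_wf E -> ectx_wf (EAppL E e)
| WAppR v E : is_value v -> ectx_wf E -> ectx_wf (EAppR v E)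
| WBEq b el er E : ectx_wf E -> ectx_wf (EBEq b el er E)
| WXEq tx t el er E : ectx_wf E -> ectx_wf (EXEq tx t el er E).

Fixpoint plug (E : ectx) (e : expr) : expr :=
  match E with
  | EHole => e
  | EAppL E e2 => App (plug E e) e2
  | EAppR v E => App v (plug E e)
  | EBEq b el er E => BEq b el er (plug E e)
  | EXEq tx t el er E => XEq tx t el er (plug E e)
  end.

Inductive step : expr -> expr -> Prop :=
| step_ctx E e e' : ectx_wf E -> step e e' -> step (plug E e) (plug E e')
| step_beta t e v : is_value v -> step (App (Lam t e) v) (subst0 e v)
| step_eqb b c1 : step (App (Const (CEqb b)) (Const c1)) (Const (CEqc c1 b))
| step_eqc c1 b c2 :
    step (App (Const (CEqc c1 b)) (Const c2)) (Const (eq_result c1 c2)).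

Definition steps : expr -> expr -> Prop := clos_refl_trans expr step.

Inductive par_e : expr -> expr -> Prop :=
| par_var x : par_e (Var x) (Var x)
| par_const c : par_e (Const c) (Const c)
| par_lam t t' e e' : par_t t t' -> par_e e e' -> par_e (Lam t e) (Lam t' e')
| par_app e1 e1' e2 e2' : par_e e1 e1' -> par_e e2 e2' -> par_e (App e1 e2) (App e1' e2')
| par_beta t e e' v v' : is_value v -> par_e e e' -> par_e v v' ->
    par_e (App (Lam t e) v) (subst0 e' v')
| par_eqb b c1 : par_e (App (Const (CEqb b)) (Const c1)) (Const (CEqc c1 b))
| par_eqc c1 b c2 :
    par_e (App (Const (CEqc c1 b)) (Const c2)) (Const (eq_result c1 c2))
| par_beq b el el' er er' e e' : par_e el el' -> par_e er er' -> par_e e e' ->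
    par_e (BEq b el er e) (BEq b el' er' e')
| par_xeq tx tx' t t' el el' er er' e e' :
    par_t tx tx' -> par_t t t' -> par_e el el' -> par_e er er' -> par_e e e' ->
    par_e (XEq tx t el er e) (XEq tx' t' el' er' e')
with par_t : ty -> ty -> Prop :=
| par_tref b r r' : par_e r r' -> par_t (TRef b r) (TRef b r')
| par_tarr tx tx' t t' : par_t tx tx' -> par_t t t' -> par_t (TArr tx t) (TArr tx' t')
| par_tpeq t t' el el' er er' : par_t t t' -> par_e el el' -> par_e er er' ->
    par_t (TPEq t el er) (TPEq t' el' er').

Definition par_steps : expr -> expr -> Prop := clos_refl_trans expr par_e.

From Stdlib Require Import Arith Lia Relations.

(* Forward: parallel reduction simulates evaluation (a step of [e1] is
   matched by zero or one step of any parallel reduct [e2], again related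
   by [par_e]), and a constant parallel-reduces only to itself.
   Backward, following Takahashi: if [e1 => e2 -> e3] then [e1 ->* e1' => e3],
   and if [e1 => v] with [v] a value then [e1] evaluates to a value [v1 => v].
   Both go by well-founded induction on the size of the derivation of
   [e1 => e2]; when [e1] is a parallel beta-redex [(\x.e) v => e'[x:=v']] we
   first contract it to [e[x:=v] => e'[x:=v']], whose derivation is smaller
   once the size of [v => v'] is counted per occurrence of [x] in [e']. *)

Scheme expr_ind' := Induction for expr Sort Prop
with ty_ind' := Induction for ty Sort Prop.
Combined Scheme expr_ty_ind from expr_ind', ty_ind'.

Arguments Nat.ltb : simpl never.
Arguments Nat.eqb : simpl never.

Ltac index_cases :=
  repeat (simpl; match goal with
   | |- context [?a <? ?b] => destruct (Nat.ltb_spec a b)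
   | |- context [?a =? ?b] => destruct (Nat.eqb_spec a b)
   end); try lia; try (f_equal; lia).

Ltac rewrite_ih := match goal with H : _ |- _ => rewrite H by lia end.

Lemma lift_lift :
  (forall e c c', c <= c' -> lift_e c (lift_e c' e) = lift_e (S c') (lift_e c e)) /\
  (forall t c c', c <= c' -> lift_t c (lift_t c' t) = lift_t (S c') (lift_t c t)).
Proof.
  apply expr_ty_ind; intros; simpl; try index_cases; f_equal; rewrite_ih; reflexivity.
Qed.

Lemma lift_lift0 s c : lift_e (S c) (lift_e 0 s) = lift_e 0 (lift_e c s).
Proof. symmetry; apply (proj1 lift_lift); lia. Qed.

Lemma lift_subst_le :
  (forall e k c s, k <= c ->
     lift_e c (subst_e k s e) = subst_e k (lift_e c s) (lift_e (S c) e)) /\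
  (forall t k c s, k <= c ->
     lift_t c (subst_t k s t) = subst_t k (lift_e c s) (lift_t (S c) t)).
Proof.
  apply expr_ty_ind; intros; simpl; try index_cases;
    f_equal; rewrite_ih; rewrite ?lift_lift0; reflexivity.
Qed.

Lemma lift_subst_ge :
  (forall e k c s, c <= k ->
     lift_e c (subst_e k s e) = subst_e (S k) (lift_e c s) (lift_e c e)) /\
  (forall t k c s, c <= k ->
     lift_t c (subst_t k s t) = subst_t (S k) (lift_e c s) (lift_t c t)).
Proof.
  apply expr_ty_ind; intros; simpl; try index_cases;
    f_equal; rewrite_ih; rewrite ?lift_lift0; reflexivity.
Qed.

Lemma subst_lift :
  (forall e k u, subst_e k u (lift_e k e) = e) /\
  (forall t k u, subst_t k u (lift_t k t) = t).
Proof. apply expr_ty_ind; intros; simpl; try index_cases; f_equal; auto. Qed.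

Lemma subst_subst :
  (forall e j k v s, j <= k ->
     subst_e k s (subst_e j v e) =
     subst_e j (subst_e k s v) (subst_e (S k) (lift_e j s) e)) /\
  (forall t j k v s, j <= k ->
     subst_t k s (subst_t j v t) =
     subst_t j (subst_e k s v) (subst_t (S k) (lift_e j s) t)).
Proof.
  apply expr_ty_ind; intros; simpl.
  all: try (index_cases; rewrite (proj1 subst_lift); reflexivity).
  all: f_equal; rewrite_ih; rewrite ?lift_lift0; try reflexivity.
  all: rewrite (proj1 lift_subst_ge) by lia; reflexivity.
Qed.

Lemma value_lift v c : is_value v -> is_value (lift_e c v).
Proof. induction 1; constructor; auto. Qed.

Lemma value_subst v k s : is_value v -> is_value (subst_e k s v).
Proof. induction 1; constructor; auto. Qed.

Fixpoint occ_e (k : nat) (e : expr) : nat :=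
  match e with
  | Const _ => 0
  | Var n => if n =? k then 1 else 0
  | App e1 e2 => occ_e k e1 + occ_e k e2
  | Lam t e => occ_t k t + occ_e (S k) e
  | BEq _ el er e => occ_e k el + occ_e k er + occ_e k e
  | XEq tx t el er e => occ_t k tx + occ_t (S k) t + occ_e k el + occ_e k er + occ_e k e
  end
with occ_t (k : nat) (t : ty) : nat :=
  match t with
  | TRef _ r => occ_e (S k) r
  | TArr tx t => occ_t k tx + occ_t (S k) t
  | TPEq t el er => occ_t k t + occ_e k el + occ_e k er
  end.

Lemma occ_lift_ge :
  (forall e c k, c <= k -> occ_e (S k) (lift_e c e) = occ_e k e) /\
  (forall t c k, c <= k -> occ_t (S k) (lift_t c t) = occ_t k t).
Proof. apply expr_ty_ind; intros; simpl; try index_cases; repeat rewrite_ih; reflexivity. Qed.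

Lemma occ_lift_lt :
  (forall e c k, k < c -> occ_e k (lift_e c e) = occ_e k e) /\
  (forall t c k, k < c -> occ_t k (lift_t c t) = occ_t k t).
Proof. apply expr_ty_ind; intros; simpl; try index_cases; repeat rewrite_ih; reflexivity. Qed.

Lemma occ_lift_self :
  (forall e c, occ_e c (lift_e c e) = 0) /\
  (forall t c, occ_t c (lift_t c t) = 0).
Proof. apply expr_ty_ind; intros; simpl; try index_cases; repeat rewrite_ih; reflexivity. Qed.

Lemma occ_subst_lift_ge :
  (forall e j k v, j <= k -> occ_e j (subst_e (S k) (lift_e j v) e) = occ_e j e) /\
  (forall t j k v, j <= k -> occ_t j (subst_t (S k) (lift_e j v) t) = occ_t j t).
Proof.
  apply expr_ty_ind; intros; simpl; try (index_cases; apply (proj1 occ_lift_self));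
    rewrite <- ?lift_lift0; repeat rewrite_ih; reflexivity.
Qed.

Lemma occ_subst_le :
  (forall e j k s, j <= k -> occ_e k (subst_e j s e) = occ_e (S k) e + occ_e j e * occ_e k s) /\
  (forall t j k s, j <= k -> occ_t k (subst_t j s t) = occ_t (S k) t + occ_t j t * occ_e k s).
Proof.
  apply expr_ty_ind; intros; simpl; try (index_cases; fail).
  all: repeat rewrite_ih; rewrite ?(proj1 occ_lift_ge) by lia; lia.
Qed.

(* In a beta step the argument's derivation is counted once per occurrence of
   the bound variable in the reduct body; this is what makes [parn_subst] hold. *)
Inductive parn : nat -> expr -> expr -> Prop :=
| pn_var n x : parn n (Var x) (Var x)
| pn_const n c : parn n (Const c) (Const c)
| pn_lam n n1 n2 t t' e e' : parnt n1 t t' -> parn n2 e e' -> n1 + n2 < n ->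
    parn n (Lam t e) (Lam t' e')
| pn_app n n1 n2 e1 e1' e2 e2' : parn n1 e1 e1' -> parn n2 e2 e2' -> n1 + n2 < n ->
    parn n (App e1 e2) (App e1' e2')
| pn_beta n n1 n2 t e e' v v' : is_value v -> parn n1 e e' -> parn n2 v v' ->
    n1 + occ_e 0 e' * n2 < n ->
    parn n (App (Lam t e) v) (subst0 e' v')
| pn_eqb n b c1 : parn n (App (Const (CEqb b)) (Const c1)) (Const (CEqc c1 b))
| pn_eqc n c1 b c2 :
    parn n (App (Const (CEqc c1 b)) (Const c2)) (Const (eq_result c1 c2))
| pn_beq n n1 n2 n3 b el el' er er' e e' :
    parn n1 el el' -> parn n2 er er' -> parn n3 e e' -> n1 + n2 + n3 < n ->
    parn n (BEq b el er e) (BEq b el' er' e')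
| pn_xeq n n1 n2 n3 n4 n5 tx tx' t t' el el' er er' e e' :
    parnt n1 tx tx' -> parnt n2 t t' -> parn n3 el el' -> parn n4 er er' -> parn n5 e e' ->
    n1 + n2 + n3 + n4 + n5 < n ->
    parn n (XEq tx t el er e) (XEq tx' t' el' er' e')
with parnt : nat -> ty -> ty -> Prop :=
| pnt_ref n n1 b r r' : parn n1 r r' -> n1 < n -> parnt n (TRef b r) (TRef b r')
| pnt_arr n n1 n2 tx tx' t t' : parnt n1 tx tx' -> parnt n2 t t' -> n1 + n2 < n ->
    parnt n (TArr tx t) (TArr tx' t')
| pnt_peq n n1 n2 n3 t t' el el' er er' :
    parnt n1 t t' -> parn n2 el el' -> parn n3 er er' -> n1 + n2 + n3 < n ->
    parnt n (TPEq t el er) (TPEq t' el' er').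

Scheme parn_ind' := Induction for parn Sort Prop
with parnt_ind' := Induction for parnt Sort Prop.
Combined Scheme parn_mutind from parn_ind', parnt_ind'.

Scheme par_e_ind' := Induction for par_e Sort Prop
with par_t_ind' := Induction for par_t Sort Prop.
Combined Scheme par_mutind from par_e_ind', par_t_ind'.

Lemma parn_mono n m e e' : parn n e e' -> n <= m -> parn m e e'.
Proof. intros H Hm; destruct H; econstructor; eauto; lia. Qed.

Lemma parn_par :
  (forall n e e', parn n e e' -> par_e e e') /\
  (forall n t t', parnt n t t' -> par_t t t').
Proof. apply parn_mutind; intros; econstructor; eauto. Qed.

Lemma parn_par_e n e e' : parn n e e' -> par_e e e'.
Proof. apply parn_par. Qed.

Lemma parnt_par_t n t t' : parnt n t t' -> par_t t t'.
Proof. apply parn_par. Qed.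

Lemma par_parn :
  (forall e e', par_e e e' -> exists n, parn n e e') /\
  (forall t t', par_t t t' -> exists n, parnt n t t').
Proof.
  apply par_mutind; intros; try (exists 0; constructor; fail);
    repeat match goal with H : exists _, _ |- _ => destruct H end;
    eexists; econstructor; eauto; apply Nat.lt_succ_diag_r.
Qed.

Lemma parn_lift :
  (forall n e e', parn n e e' -> forall c, parn n (lift_e c e) (lift_e c e')) /\
  (forall n t t', parnt n t t' -> forall c, parnt n (lift_t c t) (lift_t c t')).
Proof.
  apply parn_mutind; intros; simpl; try (econstructor; eauto; fail).
  - destruct (_ <? _); constructor.
  - unfold subst0; rewrite (proj1 lift_subst_le) by lia.
    econstructor; eauto using value_lift.
    rewrite (proj1 occ_lift_lt) by lia; assumption.
Qed.

Lemma parn_lift_e n e e' c : parn n e e' -> parn n (lift_e c e) (lift_e c e').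
Proof. intros; apply parn_lift; assumption. Qed.

Lemma parn_subst :
  (forall n e e', parn n e e' -> forall k m v v', parn m v v' ->
     parn (n + occ_e k e' * m) (subst_e k v e) (subst_e k v' e')) /\
  (forall n t t', parnt n t t' -> forall k m v v', parn m v v' ->
     parnt (n + occ_t k t' * m) (subst_t k v t) (subst_t k v' t')).
Proof.
  apply parn_mutind; intros; simpl.
  all: try (econstructor; eauto using parn_lift_e; nia).
  - index_cases; try constructor; eapply parn_mono; eauto; lia.
  - unfold subst0; rewrite (proj1 subst_subst) by lia.
    econstructor; eauto using value_subst, parn_lift_e.
    rewrite (proj1 occ_subst_lift_ge), (proj1 occ_subst_le) by lia; nia.
Qed.

Lemma par_subst e e' v v' : par_e e e' -> par_e v v' -> par_e (subst0 e v) (subst0 e' v').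
Proof.
  intros He Hv.
  destruct (proj1 par_parn _ _ He) as [n Hn], (proj1 par_parn _ _ Hv) as [m Hm].
  eapply parn_par_e, (proj1 parn_subst); eassumption.
Qed.

Inductive sstep : expr -> expr -> Prop :=
| s_appl e1 e1' e2 : sstep e1 e1' -> sstep (App e1 e2) (App e1' e2)
| s_appr v e2 e2' : is_value v -> sstep e2 e2' -> sstep (App v e2) (App v e2')
| s_beq b el er e e' : sstep e e' -> sstep (BEq b el er e) (BEq b el er e')
| s_xeq tx t el er e e' : sstep e e' -> sstep (XEq tx t el er e) (XEq tx t el er e')
| s_beta t e v : is_value v -> sstep (App (Lam t e) v) (subst0 e v)
| s_eqb b c1 : sstep (App (Const (CEqb b)) (Const c1)) (Const (CEqc c1 b))
| s_eqc c1 b c2 : sstep (App (Const (CEqc c1 b)) (Const c2)) (Const (eq_result c1 c2)).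

Definition ssteps : expr -> expr -> Prop := clos_refl_trans expr sstep.

Lemma sstep_plug E e e' : ectx_wf E -> sstep e e' -> sstep (plug E e) (plug E e').
Proof. induction 1; intros; simpl; try constructor; auto. Qed.

Lemma step_sstep e e' : step e e' -> sstep e e'.
Proof. induction 1; auto using sstep_plug; constructor; assumption. Qed.

Lemma sstep_step e e' : sstep e e' -> step e e'.
Proof.
  induction 1; try (constructor; assumption).
  - exact (step_ctx (EAppL EHole e2) _ _ (WAppL _ _ WHole) IHsstep).
  - exact (step_ctx (EAppR v EHole) _ _ (WAppR _ _ H WHole) IHsstep).
  - exact (step_ctx (EBEq b el er EHole) _ _ (WBEq _ _ _ _ WHole) IHsstep).
  - exact (step_ctx (EXEq tx t el er EHole) _ _ (WXEq _ _ _ _ _ WHole) IHsstep).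
Qed.

Lemma steps_iff_ssteps e e' : steps e e' <-> ssteps e e'.
Proof.
  split; induction 1;
    solve [ apply rt_step; auto using step_sstep, sstep_step
          | apply rt_refl
          | eapply rt_trans; eauto ].
Qed.

Lemma ssteps_cong (f : expr -> expr) :
  (forall a b, sstep a b -> sstep (f a) (f b)) ->
  forall a b, ssteps a b -> ssteps (f a) (f b).
Proof.
  intros Hf a b; induction 1; [apply rt_step; auto | apply rt_refl | eapply rt_trans; eauto].
Qed.

Lemma ssteps_appl e1 e1' e2 : ssteps e1 e1' -> ssteps (App e1 e2) (App e1' e2).
Proof. apply (ssteps_cong (fun x => App x e2)); constructor; assumption. Qed.

Lemma ssteps_appr v e2 e2' : is_value v -> ssteps e2 e2' -> ssteps (App v e2) (App v e2').
Proof. intro; apply (ssteps_cong (App v)); constructor; assumption. Qed.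

Lemma ssteps_app e1 v1 e2 e2' :
  ssteps e1 v1 -> is_value v1 -> ssteps e2 e2' -> ssteps (App e1 e2) (App v1 e2').
Proof. intros; eapply rt_trans; [apply ssteps_appl | apply ssteps_appr]; eassumption. Qed.

Lemma ssteps_beq b el er e e' : ssteps e e' -> ssteps (BEq b el er e) (BEq b el er e').
Proof. apply (ssteps_cong (BEq b el er)); constructor; assumption. Qed.

Lemma ssteps_xeq tx t el er e e' : ssteps e e' -> ssteps (XEq tx t el er e) (XEq tx t el er e').
Proof. apply (ssteps_cong (XEq tx t el er)); constructor; assumption. Qed.

Lemma value_sstep_irreducible v e : is_value v -> ~ sstep v e.
Proof.
  intros H; revert e; induction H; intros e0 Hs; inversion Hs; subst;
    eapply IHis_value; eassumption.
Qed.

Lemma par_value v v' : par_e v v' -> is_value v -> is_value v'.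
Proof.
  intros Hp Hv; revert v' Hp; induction Hv; intros v0 Hp; inversion Hp; subst;
    constructor; auto.
Qed.

Lemma par_const_inv c e : par_e (Const c) e -> e = Const c.
Proof. intros H; inversion H; reflexivity. Qed.

Lemma par_value_const_inv v c : is_value v -> par_e v (Const c) -> v = Const c.
Proof. intros Hv H; inversion H; subst; auto; inversion Hv. Qed.

Lemma par_value_lam_inv v t b :
  is_value v -> par_e v (Lam t b) -> exists t1 b1, v = Lam t1 b1 /\ par_e b1 b.
Proof. intros Hv H; inversion H; subst; eauto; inversion Hv. Qed.

Lemma parn_value_backward n e v : parn n e v -> is_value v ->
  exists v1, ssteps e v1 /\ is_value v1 /\ par_e v1 v.
Proof.
  revert e v; induction n as [n IH] using lt_wf_ind; intros e0 v0 H Hv.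
  inversion H; subst; try solve [inversion Hv].
  - exists (Const c); split; [apply rt_refl | split; constructor].
  - exists (Lam t e); split; [apply rt_refl | split; [constructor |]].
    eapply parn_par_e; eassumption.
  - assert (Hsub : parn (n1 + occ_e 0 e' * n2) (subst0 e v) (subst0 e' v'))
      by (apply (proj1 parn_subst); assumption).
    destruct (IH _ H3 _ _ Hsub Hv) as (v1 & Hs & Hv1 & Hp).
    exists v1; split; [eapply rt_trans; [apply rt_step, s_beta |] |]; eauto.
  - eexists; split; [apply rt_step; constructor | split; constructor].
  - eexists; split; [apply rt_step; constructor | split; constructor].
  - inversion Hv; subst.
    destruct (IH n3 ltac:(lia) e e' ltac:(assumption) ltac:(assumption))
      as (v1 & ? & ? & ?).
    exists (BEq b el er v1); split;
      [apply ssteps_beq; assumption | split; [constructor; assumption |]].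
    constructor; eauto using parn_par_e.
  - inversion Hv; subst.
    destruct (IH n5 ltac:(lia) e e' ltac:(assumption) ltac:(assumption))
      as (v1 & ? & ? & ?).
    exists (XEq tx t el er v1); split;
      [apply ssteps_xeq; assumption | split; [constructor; assumption |]].
    constructor; eauto using parn_par_e, parnt_par_t.
Qed.

Lemma par_value_backward e v : par_e e v -> is_value v ->
  exists v1, ssteps e v1 /\ is_value v1 /\ par_e v1 v.
Proof.
  intros Hp; destruct (proj1 par_parn _ _ Hp) as [n Hn].
  eapply parn_value_backward, Hn.
Qed.

Lemma par_const_backward e c : par_e e (Const c) -> ssteps e (Const c).
Proof.
  intros Hp; destruct (par_value_backward _ _ Hp (VConst c)) as (v1 & Hs & Hv1 & Hp1).
  rewrite <- (par_value_const_inv _ _ Hv1 Hp1); exact Hs.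
Qed.

Lemma par_lam_backward e t b : par_e e (Lam t b) ->
  exists t1 b1, ssteps e (Lam t1 b1) /\ par_e b1 b.
Proof.
  intros Hp; destruct (par_value_backward _ _ Hp (VLam t b)) as (v1 & Hs & Hv1 & Hp1).
  destruct (par_value_lam_inv _ _ _ Hv1 Hp1) as (t1 & b1 & -> & Hb); eauto.
Qed.

Lemma par_beta_backward e1 e2 t b v : par_e e1 (Lam t b) -> par_e e2 v -> is_value v ->
  exists e', ssteps (App e1 e2) e' /\ par_e e' (subst0 b v).
Proof.
  intros Hlam Hv v_val.
  destruct (par_lam_backward _ _ _ Hlam) as (t1 & b1 & Hs1 & Hb).
  destruct (par_value_backward _ _ Hv v_val) as (w1 & Hs2 & Hw1 & Hp2).
  exists (subst0 b1 w1); split; [| apply par_subst; assumption].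
  eapply rt_trans; [apply ssteps_app; eauto using VLam | apply rt_step, s_beta, Hw1].
Qed.

Lemma par_app_const_backward e1 e2 c1 c2 : par_e e1 (Const c1) -> par_e e2 (Const c2) ->
  ssteps (App e1 e2) (App (Const c1) (Const c2)).
Proof. intros; apply ssteps_app; auto using par_const_backward, VConst. Qed.

Lemma parn_sstep_backward n e1 e2 e3 : parn n e1 e2 -> sstep e2 e3 ->
  exists e1', ssteps e1 e1' /\ par_e e1' e3.
Proof.
  revert e1 e2 e3; induction n as [n IH] using lt_wf_ind; intros e0 e2 e3 H Hs.
  inversion H; subst; try solve [inversion Hs].
  - inversion Hs; subst.
    + destruct (IH n1 ltac:(lia) _ _ _ H0 ltac:(eassumption)) as (f & Hf & Hpf).
      exists (App f e4); split;
        [apply ssteps_appl; exact Hf | constructor; eauto using parn_par_e].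
    + destruct (par_value_backward _ _ (parn_par_e _ _ _ H0) ltac:(assumption))
        as (v1 & Hs1 & Hv1 & Hp1).
      destruct (IH n2 ltac:(lia) _ _ _ H1 ltac:(eassumption)) as (a & Ha & Hpa).
      exists (App v1 a); split; [apply ssteps_app | constructor]; assumption.
    + eapply par_beta_backward; eauto using parn_par_e.
    + eexists; split; [eapply rt_trans | constructor].
      * apply par_app_const_backward; eauto using parn_par_e.
      * apply rt_step, s_eqb.
    + eexists; split; [eapply rt_trans | constructor].
      * apply par_app_const_backward; eauto using parn_par_e.
      * apply rt_step, s_eqc.
  - assert (Hsub : parn (n1 + occ_e 0 e' * n2) (subst0 e v) (subst0 e' v'))
      by (apply (proj1 parn_subst); assumption).
    destruct (IH _ H3 _ _ _ Hsub Hs) as (e1' & Hs1 & Hp1).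
    exists e1'; split; [eapply rt_trans; [apply rt_step, s_beta |] |]; eauto.
  - inversion Hs; subst.
    destruct (IH n3 ltac:(lia) _ _ _ ltac:(eassumption) ltac:(eassumption)) as (x & ? & ?).
    exists (BEq b el er x); split;
      [apply ssteps_beq; assumption | constructor; eauto using parn_par_e].
  - inversion Hs; subst.
    destruct (IH n5 ltac:(lia) _ _ _ ltac:(eassumption) ltac:(eassumption)) as (x & ? & ?).
    exists (XEq tx t el er x); split;
      [apply ssteps_xeq; assumption | constructor; eauto using parn_par_e, parnt_par_t].
Qed.

Lemma par_sstep_backward e2 e3 e1 : sstep e2 e3 -> par_e e1 e2 ->
  exists e1', ssteps e1 e1' /\ par_e e1' e3.
Proof.
  intros Hs Hp; destruct (proj1 par_parn _ _ Hp) as [n Hn].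
  eapply parn_sstep_backward; eassumption.
Qed.

Lemma par_sstep_forward e1 e1' e2 : sstep e1 e1' -> par_e e1 e2 ->
  exists e2', ssteps e2 e2' /\ par_e e1' e2'.
Proof.
  intros Hs; revert e2; induction Hs; intros e0 Hp; inversion Hp; subst;
    try solve [inversion Hs | inversion H].
  - destruct (IHHs _ ltac:(eassumption)) as (f & Hf & Hpf).
    exists (App f e2'); split; [apply ssteps_appl; exact Hf | constructor; assumption].
  - destruct (IHHs _ ltac:(eassumption)) as (f & Hf & Hpf).
    exists (App e1' f); split; [apply ssteps_appr; eauto using par_value | constructor; assumption].
  - exfalso; eapply value_sstep_irreducible; eassumption.
  - destruct (IHHs _ ltac:(eassumption)) as (f & Hf & Hpf).
    exists (BEq b el' er' f); split; [apply ssteps_beq; exact Hf | constructor; assumption].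
  - destruct (IHHs _ ltac:(eassumption)) as (f & Hf & Hpf).
    exists (XEq tx' t' el' er' f); split; [apply ssteps_xeq; exact Hf | constructor; assumption].
  - inversion H2; subst.
    eexists; split; [apply rt_step, s_beta; eauto using par_value | apply par_subst; assumption].
  - eexists; split; [apply rt_refl | apply par_subst; assumption].
  - apply par_const_inv in H1, H3; subst.
    eexists; split; [apply rt_step, s_eqb | constructor].
  - eexists; split; [apply rt_refl | constructor].
  - apply par_const_inv in H1, H3; subst.
    eexists; split; [apply rt_step, s_eqc | constructor].
  - eexists; split; [apply rt_refl | constructor].
Qed.

Section Simulation.

Variables (A : Type) (S P : relation A).

Hypothesis simulation_step : forall a a' b, S a a' -> P a b ->
  exists b', clos_refl_trans A S b b' /\ P a' b'.

Lemma rt_simulation a a' b : clos_refl_trans A S a a' -> P a b ->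
  exists b', clos_refl_trans A S b b' /\ P a' b'.
Proof.
  intros Haa'; revert b; induction Haa' as [a a' Hs | a | a a1 a' _ IH1 _ IH2]; intros b Hp.
  - apply (simulation_step a a' b Hs Hp).
  - exists b; split; [apply rt_refl | exact Hp].
  - destruct (IH1 b Hp) as (b1 & Hb1 & Hp1).
    destruct (IH2 b1 Hp1) as (b' & Hb' & Hp').
    exists b'; split; [eapply rt_trans; eassumption | exact Hp'].
Qed.

End Simulation.

Lemma par_e_steps_const_iff e1 e2 c : par_e e1 e2 ->
  steps e1 (Const c) <-> steps e2 (Const c).
Proof.
  intros Hp; rewrite !steps_iff_ssteps; split; intros Hs.
  - destruct (rt_simulation _ _ _ par_sstep_forward _ _ _ Hs Hp) as (e2' & Hs2 & Hc).
    rewrite (par_const_inv _ _ Hc) in Hs2; exact Hs2.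
  - destruct (rt_simulation _ _ (fun a b => par_e b a) par_sstep_backward _ _ _ Hs Hp)
      as (e1' & Hs1 & Hc).
    eapply rt_trans; [exact Hs1 | apply par_const_backward, Hc].
Qed.

Theorem corollaryC17 (e1 e2 : expr) :
  par_steps e1 e2 ->
  forall c : const, steps e1 (Const c) <-> steps e2 (Const c).
Proof.
  induction 1 as [e1 e2 Hp | e | e1 e2 e3 _ IH12 _ IH23]; intros c.
  - apply par_e_steps_const_iff, Hp.
  - reflexivity.
  - rewrite IH12; apply IH23.
Qed.
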